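(* Let $k\ge2$, $K\ge1$ be integers, let $R\ge k$ be an integer and $L$ a positive integer divisible by $R^{K-1}$. For $A$ dividing $L$ let $f_A=(\mathsf{1}^A\mathsf{2}^A\cdots\mathsf{k}^A)^{L/A}\in[k]^{kL}$, and for a word $w$ over $[K]$ let $\hat w$ be the word over $[k]$ obtained by replacing each symbol $l\in[K]$ of $w$ by $f_{R^{l-1}}$. Let $w_1,w_2$ be words over $[K]$ and let $s=(w_1',w_2')$ be any common subsequence between $\hat w_1$ and $\hat w_2$. Then \[\operatorname{span} s\ \ge\ \left(k+1-\frac kR-\frac{8R^{K-1}}{L}\right)\operatorname{len} s-2Lk(k+1)\cdot\mathrm{LCS}(w_1,w_2)-16R^{K-1}.\]
   Context: $\alpha^A$ denotes letter $\alpha$ repeated $A$ times, and $u^m$ denotes $m$ concatenated copies of the word $u$. Symbols are distinguishable positions. A common subsequence of words $u_1,u_2$ is a pair $(u_1',u_2')$ of subsequences of $u_1,u_2$ that are equal as words; $\operatorname{len}$ is their common length; $\mathrm{LCS}(u_1,u_2)$ is the maximum length of a common subsequence. The span of a subsequence $u'$ in $u$ is the length of the shortest block of consecutive symbols of $u$ containing $u'$, and $\operatorname{span}(u_1',u_2')=\operatorname{span}_{u_1}u_1'+\operatorname{span}_{u_2}u_2'$. *)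

From mathcomp Require Import all_boot all_order all_algebra.
Set Implicit Arguments. Unset Strict Implicit. Unset Printing Implicit Defensive.

Definition word_over (n : nat) (w : seq nat) : bool :=
  all (fun a => (1 <= a <= n)%N) w.

Definition fblock (k L A : nat) : seq nat :=
  flatten (nseq (L %/ A) (flatten [seq nseq A i | i <- iota 1 k])).

Definition hat (k L R : nat) (w : seq nat) : seq nat :=
  flatten [seq fblock k L (R ^ l.-1) | l <- w].

(* A subsequence of u is given by a selection mask b (size b = size u);
   symbols are distinguishable positions. *)
Definition positions (b : bitseq) : seq nat :=
  [seq i <- iota 0 (size b) | nth false b i].

(* span of the subsequence selected by b: length of the shortest block of
   consecutive symbols containing it (0 for the empty subsequence). *)
Definition span_mask (b : bitseq) : nat :=
  if positions b is i :: _ then (last i (positions b) - i).+1 else 0.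

Definition common_subseq (u1 u2 : seq nat) (b1 b2 : bitseq) : Prop :=
  size b1 = size u1 /\ size b2 = size u2 /\ mask b1 u1 = mask b2 u2.

Definition cs_len (u1 : seq nat) (b1 : bitseq) : nat := size (mask b1 u1).

Definition cs_span (b1 b2 : bitseq) : nat := span_mask b1 + span_mask b2.

Definition LCS (u1 u2 : seq nat) : nat :=
  \max_(b : (size u1).-tuple bool | subseq (mask b u1) u2) size (mask b u1).

From mathcomp Require Import all_boot all_order all_algebra zify lra.
Import Order.TTheory GRing.Theory Num.Theory.
Set Implicit Arguments. Unset Strict Implicit. Unset Printing Implicit Defensive.

(* A common subsequence of [hat w1] and [hat w2] is a chain of matched position
   pairs x = (p, q), strictly increasing in both coordinates.  Every position lies
   in a copy of some f_A, with scale A = R^(l-1) read off the letter l of w.  The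
   potential R (p + q) - c(x) + 3 R^(K-1) R (block of p + block of q), where c(x)
   compensates for the phases of p and q inside their runs, grows by at least
   R (k + 1) - k from one matched pair to the next, except when the two scales
   are equal, where only 2 R - k is guaranteed.  Pairs of equal scale come from
   equal letters of w1 and w2, and a Dilworth-type extraction turns them into a
   common subsequence of w1 and w2, so there are at most 2 k L LCS(w1, w2) of them.
   The block term is paid for by the span itself, and solving the resulting
   linear inequalities gives the bound. *)

Lemma nth_flatten_uniform (T : Type) (x0 : T) N (ss : seq (seq T)) i :
  0 < N -> all (fun s => size s == N) ss -> i < N * size ss ->
  nth x0 (flatten ss) i = nth x0 (nth [::] ss (i %/ N)) (i %% N).
Proof.
move=> N_gt0; elim: ss i => [|s ss IHss] i /=; first by rewrite muln0.
case/andP=> /eqP size_s size_ss lt_i; rewrite nth_cat size_s.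
have [lt_iN | le_Ni] := ltnP i N; first by rewrite divn_small // modn_small.
have -> : i = 1 * N + (i - N) by rewrite mul1n subnKC.
rewrite divnMDl // modnMDl add1n /= mul1n addKn IHss //.
by move: lt_i; rewrite mulnS; lia.
Qed.

Lemma size_flatten_nseq_blocks k A : size (flatten [seq nseq A i | i <- iota 1 k]) = k * A.
Proof.
rewrite size_flatten /shape -map_comp.
by elim: k 1 => [|k IHk] m //=; rewrite size_nseq IHk mulSn.
Qed.

Lemma size_fblock k L A : 0 < A -> A %| L -> size (fblock k L A) = k * L.
Proof.
move=> A_gt0 AL; rewrite /fblock size_flatten /shape map_nseq sumn_nseq.
by rewrite size_flatten_nseq_blocks -mulnA [A * _]mulnC divnK.
Qed.

Lemma nth_fblock k L A o : 0 < A -> A %| L -> o < k * L ->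
  nth 0 (fblock k L A) o = o %/ A %% k + 1.
Proof.
move=> A_gt0 AL lt_o.
have k_gt0 : 0 < k by case: k lt_o.
have kA_gt0 : 0 < k * A by rewrite muln_gt0 k_gt0.
rewrite /fblock (@nth_flatten_uniform _ _ (k * A)) //; last first.
- by rewrite size_nseq -mulnA [A * _]mulnC divnK.
- by apply/allP=> s /nseqP [-> _]; rewrite size_flatten_nseq_blocks.
rewrite nth_nseq.
have -> : o %/ (k * A) < L %/ A by rewrite ltn_divLR // mulnCA divnK.
rewrite (@nth_flatten_uniform _ _ A) //; last first.
- by rewrite size_map size_iota [A * k]mulnC ltn_pmod.
- by apply/allP=> s /mapP [i _ ->]; rewrite size_nseq.
rewrite (nth_map 0) ?size_iota ?ltn_divLR ?ltn_pmod // nth_nseq ltn_pmod //.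
by rewrite nth_iota ?ltn_divLR ?ltn_pmod // modn_divl addnC.
Qed.

Lemma mul_leq_exp_ltn R a b : 1 < R -> R ^ a < R ^ b -> R * R ^ a <= R ^ b.
Proof. by move=> R_gt1; rewrite ltn_exp2l // => lt_ab; rewrite -expnS leq_pexp2l // ltnW. Qed.

Lemma leq_exp_neq R a b M : 1 < R -> R ^ a != R ^ b -> R ^ a <= M -> R ^ b <= M -> R <= M.
Proof.
move=> R_gt1; rewrite eqn_exp2l // => neq_ab le_aM le_bM.
have R_le_exp c : 0 < c -> R <= R ^ c.
  by move=> c_gt0; rewrite -{1}(expn1 R) leq_pexp2l // ltnW.
have [lt_ab | lt_ba | eq_ab] := ltngtP a b; last by rewrite eq_ab eqxx in neq_ab.
- by apply: leq_trans le_bM; apply: R_le_exp; apply: leq_ltn_trans lt_ab.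
- by apply: leq_trans le_aM; apply: R_le_exp; apply: leq_ltn_trans lt_ba.
Qed.

Section HatStructure.

Variables (k K R L : nat).
Hypotheses (k_gt0 : 0 < k) (R_gt0 : 0 < R) (L_gt0 : 0 < L) (RK_dvd_L : R ^ K.-1 %| L).

Definition block (p : nat) : nat := p %/ (k * L).

Definition scale (w : seq nat) (p : nat) : nat := R ^ (nth 0 w (block p)).-1.

Lemma kL_gt0 : 0 < k * L. Proof. by rewrite muln_gt0 k_gt0. Qed.

Lemma exp_letter_dvd l : l <= K -> R ^ l.-1 %| L.
Proof. by move=> le_lK; apply: dvdn_trans RK_dvd_L; apply: dvdn_exp2l; lia. Qed.

Lemma size_hat w : word_over K w -> size (hat k L R w) = k * L * size w.
Proof.
move=> /allP w_over; rewrite /hat size_flatten /shape -map_comp.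
have /eq_in_map -> : {in w, size \o (fun l => fblock k L (R ^ l.-1)) =1 fun=> k * L}.
  by move=> l /w_over /andP [_ le_lK]; rewrite /= size_fblock ?expn_gt0 ?R_gt0 // exp_letter_dvd.
by elim: (w) => [|_ s IHs] /=; rewrite ?muln0 // IHs mulnS addnC.
Qed.

Variables (w : seq nat) (p : nat).
Hypotheses (w_over : word_over K w) (p_lt : p < size (hat k L R w)).

Lemma block_lt_size : block p < size w.
Proof. by move: p_lt; rewrite size_hat // /block ltn_divLR ?kL_gt0 // mulnC. Qed.

Lemma letter_bounds : 1 <= nth 0 w (block p) <= K.
Proof. exact: (allP w_over) (mem_nth 0 block_lt_size). Qed.

Lemma scale_gt0 : 0 < scale w p.
Proof. by rewrite /scale expn_gt0 R_gt0. Qed.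

Lemma scale_le : scale w p <= R ^ K.-1.
Proof. by rewrite leq_pexp2l //; case/andP: letter_bounds; lia. Qed.

Lemma nth_hat : nth 0 (hat k L R w) p = p %/ scale w p %% k + 1.
Proof.
have [_ le_lK] := andP letter_bounds.
have A_dvd : scale w p %| L by apply: exp_letter_dvd.
move: p_lt; rewrite size_hat // => lt_p.
rewrite /hat (@nth_flatten_uniform _ _ (k * L)) ?kL_gt0 ?size_map //; last first.
  apply/allP=> s /mapP [l /(allP w_over) /andP [_ le_l] ->].
  by rewrite size_fblock ?expn_gt0 ?R_gt0 ?exp_letter_dvd.
rewrite (nth_map 0) ?block_lt_size // nth_fblock ?ltn_pmod ?kL_gt0 ?scale_gt0 //.
rewrite -/(block p) -/(scale w p) !modn_divl; congr (_ %/ _ + 1).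
by rewrite modn_dvdm // dvdn_pmul2l.
Qed.

End HatStructure.

Lemma positionsE b : positions b = mask b (iota 0 (size b)).
Proof. by rewrite /positions filter_mask; congr mask; have := mkseq_nth false b; rewrite /mkseq. Qed.

Lemma mask_positions (u : seq nat) b : size b = size u ->
  mask b u = map (nth 0 u) (positions b).
Proof. by move=> size_b; rewrite positionsE map_mask size_b; have := mkseq_nth 0 u; rewrite /mkseq => ->. Qed.

Lemma sorted_positions b : sorted ltn (positions b).
Proof. by rewrite positionsE (subseq_sorted ltn_trans (mask_subseq _ _)) ?iota_ltn_sorted. Qed.

Lemma positions_lt b : all (fun i => i < size b) (positions b).
Proof. by apply/allP => i; rewrite positionsE => /mem_mask; rewrite mem_iota. Qed.

Lemma subseq_map_nth (w : seq nat) (I : seq nat) :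
  sorted ltn I -> all (fun i => i < size w) I -> subseq (map (nth 0 w) I) w.
Proof.
move=> sorted_I I_lt.
have -> : I = [seq i <- iota 0 (size w) | i \in I].
  apply: (irr_sorted_eq ltn_trans ltnn sorted_I).
    by rewrite sorted_filter ?iota_ltn_sorted //; exact: ltn_trans.
  move=> i; rewrite mem_filter mem_iota /=.
  by case I_i: (i \in I) => //=; have := allP I_lt i I_i.
rewrite filter_mask map_mask; have := mkseq_nth 0 w; rewrite /mkseq => ->.
exact: mask_subseq.
Qed.

Lemma leq_size_LCS (w1 w2 s : seq nat) : subseq s w1 -> subseq s w2 -> size s <= LCS w1 w2.
Proof.
move=> /subseqP [m size_m ->] sub2.
have size_m' : size m == size w1 by apply/eqP.
exact: (@leq_bigmax_cond _ (fun b : (size w1).-tuple bool => subseq (mask b w1) w2)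
          (fun b => size (mask b w1)) (Tuple size_m')).
Qed.

Lemma count_sorted_window N i (P : seq nat) : 0 < N -> sorted ltn P ->
  count (fun p => p %/ N == i) P <= N.
Proof.
move=> N_gt0 sorted_P; rewrite -size_filter -{2}(size_iota (i * N) N).
apply: uniq_leq_size; first by rewrite filter_uniq ?(sorted_uniq ltn_trans ltnn).
move=> p; rewrite mem_filter mem_iota => /andP [/eqP p_div _].
by have := divn_eq p N; have := ltn_pmod p N_gt0; rewrite p_div; lia.
Qed.

Definition le2 (x y : nat * nat) := (x.1 <= y.1) && (x.2 <= y.2).
Definition lt2 (x y : nat * nat) := (x.1 < y.1) && (x.2 < y.2).

Lemma lt2_trans : transitive lt2.
Proof. by move=> y x z /andP [? ?] /andP [? ?]; apply/andP; split; lia. Qed.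

Lemma count_not_lt2 x (l : seq (nat * nat)) : all (le2 x) l ->
  count (predC (lt2 x)) l <= count (fun y => y.1 == x.1) l + count (fun y => y.2 == x.2) l.
Proof.
have row_or_col y : le2 x y -> ~~ lt2 x y -> (y.1 == x.1) || (y.2 == x.2).
  case/andP=> le1 le2; rewrite /lt2 negb_and -!leqNgt => /orP [] ge.
    by rewrite eqn_leq ge le1.
  by rewrite [y.2 == _]eqn_leq ge le2 orbT.
elim: l => //= y l IHl /andP [/row_or_col x_le_y /IHl].
by case: (lt2 x y) x_le_y => /= [_|/(_ isT) /orP [] ->]; lia.
Qed.

Lemma long_strict_subchain N (l : seq (nat * nat)) :
  pairwise le2 l ->
  (forall i, count (fun x => x.1 == i) l <= N) ->
  (forall j, count (fun x => x.2 == j) l <= N) ->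
  exists2 C, {subset C <= l} & sorted lt2 C /\ size l <= 2 * N * size C.
Proof.
move: {2}(size l) (leqnn (size l)) => n; elim: n l => [|n IHn] [|x l] //= size_l;
  try by exists [::].
case/andP=> x_le pairwise_l rows cols.
set rest := filter (lt2 x) l.
have sub_filter (a : pred (nat * nat)) : count a rest <= count a l.
  by rewrite count_filter; apply: sub_count => y /andP [].
have size_rest : size rest <= n by rewrite size_filter (leq_trans (count_size _ _)).
have rows_rest i : count (fun y => y.1 == i) rest <= N.
  by apply: leq_trans (sub_filter _) _; have := rows i; rewrite /=; lia.
have cols_rest j : count (fun y => y.2 == j) rest <= N.
  by apply: leq_trans (sub_filter _) _; have := cols j; rewrite /=; lia.
have [C sub_C [sorted_C size_C]] :=
  IHn rest size_rest (pairwise_filter _ pairwise_l) rows_rest cols_rest.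
exists (x :: C).
  move=> y; rewrite !inE => /predU1P [-> | /sub_C]; first by rewrite eqxx.
  by rewrite mem_filter => /andP [_ ->]; rewrite orbT.
split.
  rewrite /= (path_sortedE lt2_trans) sorted_C andbT.
  by apply/allP => y /sub_C; rewrite mem_filter => /andP [].
have := rows x.1; have := cols x.2; rewrite /= !eqxx /= => col_x row_x.
have := @count_not_lt2 x l x_le; have := count_predC (lt2 x) l.
rewrite -size_filter -/rest /= mulnS.
set c1 := count _ l in row_x *; set c2 := count _ l in col_x *.
move: (2 * N * size C) size_C => m; lia.
Qed.

Lemma sorted_lt2_fst (C : seq (nat * nat)) : sorted lt2 C -> sorted ltn (map fst C).
Proof. by apply: homo_sorted => x y /andP []. Qed.

Lemma sorted_lt2_snd (C : seq (nat * nat)) : sorted lt2 C -> sorted ltn (map snd C).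
Proof. by apply: homo_sorted => x y /andP []. Qed.

Lemma size_agreeing_chain_le_LCS (w1 w2 : seq nat) (C : seq (nat * nat)) : sorted lt2 C ->
  all (fun y => [&& y.1 < size w1, y.2 < size w2 & nth 0 w1 y.1 == nth 0 w2 y.2]) C ->
  size C <= LCS w1 w2.
Proof.
move=> sorted_C /allP agree.
have lt1 : all (fun i => i < size w1) (map fst C).
  by apply/allP => _ /mapP [y /agree /and3P [? _ _] ->].
have lt2 : all (fun i => i < size w2) (map snd C).
  by apply/allP => _ /mapP [y /agree /and3P [_ ? _] ->].
have sub1 := subseq_map_nth (sorted_lt2_fst sorted_C) lt1.
have sub2 := subseq_map_nth (sorted_lt2_snd sorted_C) lt2.
have eq_words : map (nth 0 w1) (map fst C) = map (nth 0 w2) (map snd C).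
  by rewrite -!map_comp; apply/eq_in_map => y /agree /and3P [_ _ /eqP].
rewrite eq_words in sub1; have := leq_size_LCS sub1 sub2.
by rewrite !size_map.
Qed.

Lemma path_lt2_zip p q (P Q : seq nat) : size P = size Q ->
  path ltn p P -> path ltn q Q -> path lt2 (p, q) (zip P Q).
Proof.
elim: P Q p q => [|p' P IHP] [|q' Q] p q //= [size_PQ] /andP [lt_p path_P] /andP [lt_q path_Q].
by rewrite /lt2 /= lt_p lt_q IHP.
Qed.

Lemma last_zip2 p q (P Q : seq nat) : size P = size Q ->
  last (p, q) (zip P Q) = (last p P, last q Q).
Proof. by elim: P Q p q => [|p' P IHP] [|q' Q] p q //= [size_PQ]; rewrite IHP. Qed.

Lemma path_lt2_le2_last x (s : seq (nat * nat)) : path lt2 x s -> le2 x (last x s).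
Proof.
elim: s x => [|y s IHs] x /=; first by rewrite /le2 !leqnn.
case/andP=> /andP [lt1 lt2] /IHs /andP [le1 le2].
by apply/andP; split; apply: leq_trans (ltnW _) _; eassumption.
Qed.

Lemma all_zip_nth_eq (u1 u2 P Q : seq nat) :
  map (nth 0 u1) P = map (nth 0 u2) Q ->
  all (fun i => i < size u1) P -> all (fun i => i < size u2) Q ->
  all (fun x => [&& x.1 < size u1, x.2 < size u2 & nth 0 u1 x.1 == nth 0 u2 x.2]) (zip P Q).
Proof.
elim: P Q => [|p P IHP] [|q Q] //= [eq_pq eq_PQ] /andP [lt_p lt_P] /andP [lt_q lt_Q].
by rewrite lt_p lt_q eq_pq eqxx IHP.
Qed.

(* With k = j.+1, R = k + s and B = R A + t every case below is linear in the
   products that [lia] treats as atoms. *)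
Lemma step_within_scales_decomposed j s t A pi d a a' rho e b b' :
  let k := j.+1 in let R := k + s in let B := R * A + t in
  a < A -> a' < A -> b < B -> b' < B ->
  pi * A + a < (pi + d) * A + a' -> rho * B + b < (rho + e) * B + b' ->
  (e = 0 -> d = 0 \/ k <= d) ->
  R * (pi * A + a + (rho * B + b)) + R * (k + 1) + R * j * a + k * b'
  <= R * ((pi + d) * A + a' + ((rho + e) * B + b')) + k + R * j * a' + k * b.
Proof.
move=> k R B lt_a lt_a' lt_b lt_b' lt_p lt_q de.
have a_gap : R * k * a.+1 <= R * k * (a' + A) by rewrite leq_mul2l; lia.
have b_gap : s * b.+1 <= s * (b' + B) by rewrite leq_mul2l; lia.
case: e de lt_q => [|e] de lt_q; last first.
  have e_gap : R * B <= R * (e.+1 * B) by rewrite leq_mul2l leq_pmull ?orbT.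
  have d_gap : 0 <= R * (d * A) by [].
  rewrite /B /R /k in e_gap a_gap b_gap *; lia.
have lt_bb : b < b' by lia.
have b_gap' : s * b.+1 <= s * b' by rewrite leq_mul2l lt_bb orbT.
have [d0|le_kd] := de erefl.
  have lt_aa : a < a' by rewrite d0 in lt_p; lia.
  have a_gap' : R * k * a.+1 <= R * k * a' by rewrite leq_mul2l lt_aa orbT.
  rewrite d0 /B /R /k in a_gap' b_gap' *; lia.
have d_gap : R * (k * A) <= R * (d * A) by rewrite leq_mul2l leq_mul2r le_kd !orbT.
rewrite /B /R /k in d_gap a_gap b_gap' *; lia.
Qed.

Lemma step_within_scales k R A B p q p' q' :
  0 < k -> k <= R -> 0 < A -> R * A <= B -> p < p' -> q < q' ->
  p %/ A %% k = q %/ B %% k -> p' %/ A %% k = q' %/ B %% k ->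
  R * (p + q) + R * (k + 1) + R * k.-1 * (p %% A) + k * (q' %% B)
  <= R * (p' + q') + k + R * k.-1 * (p' %% A) + k * (q %% B).
Proof.
move=> k_gt0 le_kR A_gt0 le_RAB lt_p lt_q letter letter'.
have B_gt0 : 0 < B.
  by apply: leq_trans le_RAB; rewrite muln_gt0 A_gt0 (leq_trans k_gt0 le_kR).
have [le_pp le_qq] : p %/ A <= p' %/ A /\ q %/ B <= q' %/ B by split; apply: leq_div2r; apply: ltnW.
set j := k.-1; set s := R - k; set t := B - R * A.
have Ek : k = j.+1 by rewrite prednK.
have ER : R = j.+1 + s by rewrite -Ek subnKC.
have EB : B = (j.+1 + s) * A + t by rewrite -ER subnKC.
set pi := p %/ A; set d := p' %/ A - pi; set rho := q %/ B; set e := q' %/ B - rho.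
have Ep : p = pi * A + p %% A by rewrite -divn_eq.
have Ep' : p' = (pi + d) * A + p' %% A by rewrite subnKC // -divn_eq.
have Eq : q = rho * B + q %% B by rewrite -divn_eq.
have Eq' : q' = (rho + e) * B + q' %% B by rewrite subnKC // -divn_eq.
have period : e = 0 -> d = 0 \/ k <= d.
  move=> e0; have [|d_gt0] := posnP d; [by left | right].
  have same_block : q' %/ B = rho by apply/eqP; rewrite eqn_leq le_qq andbT -subn_eq0 -/e e0.
  have : pi + d == pi + 0 %[mod k] by rewrite addn0 subnKC // letter' same_block -letter.
  by rewrite eqn_modDl mod0n => k_dvd_d; apply: dvdn_leq.
have := @step_within_scales_decomposed j s t A pi d (p %% A) (p' %% A) rho e (q %% B) (q' %% B).
rewrite /= -EB -ER -Ep -Ep' -Eq -Eq' -Ek addn1; apply; rewrite ?ltn_pmod //.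
Qed.

Section CombineBounds.

Local Open Scope ring_scope.

Lemma combine_span_bounds (F : realFieldType) (k L M a n c l S H : F) :
  2 <= k -> 0 < L -> 0 <= M -> 0 <= n -> 0 <= c -> 0 <= l -> c <= 2 * k * L * l -> a <= k + 1 ->
  n * a - 3 * M - (k - 1) * c - 3 * M * H <= S -> (H - 2) * (k * L) <= S ->
  (a - 8 * M / L) * n - 2 * L * k * (k + 1) * l - 16 * M <= S.
Proof.
move=> k_ge2 L_gt0 M_ge0 n_ge0 c_ge0 l_ge0 le_c le_a le_pot le_blocks.
rewrite -mulrA; set b := M / L.
set T := n * a - 9 * M - (k - 1) * c.
set G := (a - 8 * b) * n - 2 * L * k * (k + 1) * l - 16 * M.
have kL_gt0 : 0 < k * L by rewrite mulr_gt0 //; lra.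
have M3_ge0 : 0 <= 3 * M by lra.
(* Weighting the two bounds by k L and 3 M eliminates H. *)
have weighted : k * L * T <= (k * L + 3 * M) * S.
  have := ler_wpM2l (ltW kL_gt0) le_pot; have := ler_wpM2l M3_ge0 le_blocks.
  by rewrite /T; nra.
have G_le : G <= T - 8 * b * n.
  have : (k - 1) * c <= (k + 1) * (2 * k * L * l).
    apply: le_trans (ler_wpM2l (_ : 0 <= k - 1) le_c) _; first lra.
    by rewrite ler_wpM2r ?mulr_ge0 //; lra.
  by rewrite /G /T; nra.
have M_eq : M = L * b by rewrite /b mulrC divfK ?gt_eqF.
have b_ge0 : 0 <= b by rewrite divr_ge0 // ltW.
have wpos : 0 < k * L + 3 * M by lra.
rewrite -(ler_pM2l wpos); apply: le_trans weighted.
apply: le_trans (ler_wpM2l (ltW wpos) G_le) _.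
have Lb_ge0 := mulr_ge0 (ltW L_gt0) b_ge0.
have bn_ge0 := mulr_ge0 (mulr_ge0 b_ge0 n_ge0) (ltW wpos).
have [T_le0 | T_gt0] := lerP T 0.
  have : L * b * T <= 0 by rewrite mulr_ge0_le0.
  by rewrite M_eq in bn_ge0 *; lra.
have le_T : L * b * T <= L * b * (n * (k + 1)).
  by rewrite ler_wpM2l // /T; nra.
have : 0 <= L * b * n * (5 * k - 3) by rewrite (mulr_ge0 (mulr_ge0 Lb_ge0 n_ge0)) //; lra.
have := mulr_ge0 (mulr_ge0 Lb_ge0 b_ge0) n_ge0.
by rewrite M_eq; lra.
Qed.

End CombineBounds.

Section Matching.

Variables (k K R L : nat) (w1 w2 : seq nat).
Hypotheses (k_gt1 : 1 < k) (le_kR : k <= R) (L_gt0 : 0 < L) (RK_dvd_L : R ^ K.-1 %| L).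
Hypotheses (w1_over : word_over K w1) (w2_over : word_over K w2).

Local Notation hat1 := (hat k L R w1).
Local Notation hat2 := (hat k L R w2).
Local Notation M := (R ^ K.-1).
Local Notation scale1 := (scale k R L w1).
Local Notation scale2 := (scale k R L w2).

Let k_gt0 : 0 < k. Proof. exact: ltnW. Qed.
Let R_gt1 : 1 < R. Proof. exact: leq_trans le_kR. Qed.
Let R_gt0 : 0 < R. Proof. exact: ltnW. Qed.

Definition matched (x : nat * nat) : bool :=
  [&& x.1 < size hat1, x.2 < size hat2 & nth 0 hat1 x.1 == nth 0 hat2 x.2].

Definition same_scale (x : nat * nat) : bool := scale1 x.1 == scale2 x.2.

Definition phase_correction (A B a b : nat) : rat := ((k * (b %% B))%:R - (R * k.-1 * (a %% A))%:R)%R.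

Definition correction (x : nat * nat) : rat :=
  if scale1 x.1 < scale2 x.2 then phase_correction (scale1 x.1) (scale2 x.2) x.1 x.2
  else if scale2 x.2 < scale1 x.1 then phase_correction (scale2 x.2) (scale1 x.1) x.2 x.1
  else 0%R.

Definition blocks (x : nat * nat) : nat := block k L x.1 + block k L x.2.

Definition potential (x : nat * nat) : rat :=
  ((R * (x.1 + x.2))%:R - correction x + (3 * M * R * blocks x)%:R)%R.

Definition gain (x : nat * nat) : rat :=
  ((R * (k + 1))%:R - k%:R - (R * k.-1)%:R * (same_scale x)%:R)%R.

Lemma matched_letter x : matched x -> x.1 %/ scale1 x.1 %% k = x.2 %/ scale2 x.2 %% k.
Proof.
case/and3P=> lt1 lt2 /eqP eq_letter.
by move: eq_letter; rewrite !(@nth_hat _ K) // => /addIn.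
Qed.

Lemma phase_correction_bound A B a b : 0 < A -> R * A <= B -> B <= M ->
  (- (R * M)%:R <= phase_correction A B a b <= (R * M)%:R)%R.
Proof.
move=> A_gt0 le_RAB le_BM; rewrite /phase_correction.
have B_gt0 : 0 < B by apply: leq_trans le_RAB; rewrite muln_gt0 R_gt0.
have le_b : k * (b %% B) <= R * M.
  by apply: leq_mul => //; apply: leq_trans le_BM; apply: ltnW; apply: ltn_pmod.
have le_a : R * k.-1 * (a %% A) <= R * M.
  rewrite -mulnA leq_mul2l; apply/orP; right; apply: (leq_trans _ le_BM).
  apply: leq_trans le_RAB; apply: leq_mul; first by apply: leq_trans le_kR; apply: leq_pred.
  exact/ltnW/ltn_pmod.
move: le_a le_b; rewrite -!(ler_nat rat) => le_a le_b.
have := ler0n rat (k * (b %% B)); have := ler0n rat (R * k.-1 * (a %% A)).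
by move=> *; apply/andP; split; lra.
Qed.

Lemma correction_bound x : x.1 < size hat1 -> x.2 < size hat2 ->
  (- (R * M)%:R <= correction x <= (R * M)%:R)%R.
Proof.
move=> lt1 lt2; rewrite /correction.
case: ltngtP => [lt_AB | lt_BA | _]; last by rewrite oppr_le0 ler0n.
- by apply: phase_correction_bound; rewrite ?scale_gt0 ?scale_le ?mul_leq_exp_ltn.
- by apply: phase_correction_bound; rewrite ?scale_gt0 ?scale_le ?mul_leq_exp_ltn.
Qed.

Lemma R_le_M_of_scale_neq x : matched x -> ~~ same_scale x -> R <= M.
Proof.
case/and3P=> lt1 lt2 _; rewrite /same_scale /scale => neq.
by apply: (leq_exp_neq R_gt1 neq); exact: (@scale_le _ K).
Qed.

Lemma R_mul_succ_pred : (R * (k + 1) = R * k.-1 + 2 * R)%N.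
Proof. by rewrite -{1}(prednK k_gt0); lia. Qed.

Lemma gain_le x : matched x -> (gain x <= (2 * R + R * M)%:R)%R.
Proof.
move=> mx; rewrite /gain R_mul_succ_pred.
case: (boolP (same_scale x)) => [_ | /(R_le_M_of_scale_neq mx) le_RM] /=.
  by rewrite !natrD mulr1; have := ler0n rat k; have := ler0n rat (R * M); lra.
have le_RkM : (R * k.-1 <= R * M)%N.
  by rewrite leq_mul2l (leq_trans (leq_pred k) (leq_trans le_kR le_RM)) orbT.
move: le_RkM; rewrite -(ler_nat rat) !natrD mulr0 subr0 => le_RkM.
by have := ler0n rat k; lra.
Qed.

Lemma step_within_blocks x y : matched x -> matched y -> lt2 x y ->
  block k L x.1 = block k L y.1 -> block k L x.2 = block k L y.2 ->
  ((R * (x.1 + x.2))%:R - correction x + gain y <= (R * (y.1 + y.2))%:R - correction y)%R.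
Proof.
move=> mx my /andP [lt_1 lt_2] eq1 eq2.
have base : ((R * (x.1 + x.2))%:R + (2 * R)%:R <= (R * (y.1 + y.2))%:R :> rat)%R.
  by rewrite -natrD ler_nat mulnC -mulnDl mulnC leq_mul2l; apply/orP; right; lia.
have letter_x := matched_letter mx; have letter_y := matched_letter my.
have [sc1 sc2] : scale1 y.1 = scale1 x.1 /\ scale2 y.2 = scale2 x.2.
  by rewrite /scale -eq1 -eq2.
rewrite /correction /gain /same_scale sc1 sc2 in letter_y *.
set A := scale1 x.1 in letter_x letter_y *; set B := scale2 x.2 in letter_x letter_y *.
have A_gt0 : (0 < A)%N by apply: scale_gt0.
have B_gt0 : (0 < B)%N by apply: scale_gt0.
case: ltngtP => [lt_AB | lt_BA | _].
- have := step_within_scales k_gt0 le_kR A_gt0 (mul_leq_exp_ltn R_gt1 lt_AB) lt_1 lt_2 letter_x letter_y.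
  rewrite -(ler_nat rat) !natrD /phase_correction mulr0 subr0; lra.
- have := step_within_scales k_gt0 le_kR B_gt0 (mul_leq_exp_ltn R_gt1 lt_BA) lt_2 lt_1
    (esym letter_x) (esym letter_y).
  rewrite -(ler_nat rat) [(x.2 + x.1)%N]addnC [(y.2 + y.1)%N]addnC !natrD /phase_correction mulr0 subr0; lra.
- rewrite mulr1 !subr0 R_mul_succ_pred natrD; have := ler0n rat k; lra.
Qed.

Lemma step_across_blocks x y : matched x -> matched y -> lt2 x y -> (blocks x < blocks y)%N ->
  (potential x + gain y <= potential y)%R.
Proof.
move=> mx my /andP [lt_1 lt_2] lt_blocks.
have base : ((R * (x.1 + x.2))%:R + (2 * R)%:R <= (R * (y.1 + y.2))%:R :> rat)%R.
  by rewrite -natrD ler_nat mulnC -mulnDl mulnC leq_mul2l; apply/orP; right; lia.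
have penalty : ((3 * M * R * blocks x)%:R + 3 * (R * M)%:R <= (3 * M * R * blocks y)%:R :> rat)%R.
  rewrite -natrM -natrD ler_nat; apply: leq_trans (leq_mul (leqnn (3 * M * R)) lt_blocks).
  by rewrite mulnS addnC [(R * M)%N]mulnC mulnA.
case/and3P: (mx) => x1 x2 _; case/and3P: (my) => y1 y2 _.
have /andP [cx1 cx2] := correction_bound x1 x2; have /andP [cy1 cy2] := correction_bound y1 y2.
by have := gain_le my; rewrite /potential natrD; lra.
Qed.

Lemma potential_step x y : matched x -> matched y -> lt2 x y ->
  (potential x + gain y <= potential y)%R.
Proof.
move=> mx my lt_xy; have /andP [lt_1 lt_2] := lt_xy.
have le_block i j : (i < j)%N -> (block k L i <= block k L j)%N.
  by move=> lt_ij; apply/leq_div2r/ltnW.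
have : (block k L x.1 = block k L y.1 /\ block k L x.2 = block k L y.2) \/
    (blocks x < blocks y)%N.
  by have := le_block _ _ lt_1; have := le_block _ _ lt_2; rewrite /blocks; lia.
case=> [[eq1 eq2] | lt_blocks].
- have := step_within_blocks mx my lt_xy eq1 eq2.
  by rewrite /potential /blocks eq1 eq2; lra.
- exact: step_across_blocks.
Qed.

Lemma potential_path x s : path lt2 x s -> all matched (x :: s) ->
  (potential x + \sum_(y <- s) gain y <= potential (last x s))%R.
Proof.
elim: s x => [|y s IHs] x /=; first by rewrite big_nil addr0.
case/andP=> lt_xy path_s /and3P [mx my matched_s].
rewrite big_cons addrA; apply: le_trans (IHs y path_s _); last by rewrite /= my.
by rewrite lerD2r potential_step.
Qed.

Lemma sum_gain s : (\sum_(y <- s) gain y =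
  (size s)%:R * ((R * (k + 1))%:R - k%:R) - (R * k.-1)%:R * (count same_scale s)%:R :> rat)%R.
Proof.
elim: s => [|y s IHs]; first by rewrite big_nil !mul0r mulr0 subr0.
by rewrite big_cons IHs /gain /= !natrD; lra.
Qed.

Lemma same_scale_letter x : matched x -> same_scale x ->
  nth 0 w1 (block k L x.1) == nth 0 w2 (block k L x.2).
Proof.
case/and3P=> lt1 lt2 _; rewrite /same_scale /scale eqn_exp2l //.
have /andP [l1 _] := letter_bounds k_gt0 R_gt0 L_gt0 RK_dvd_L w1_over lt1.
have /andP [l2 _] := letter_bounds k_gt0 R_gt0 L_gt0 RK_dvd_L w2_over lt2.
by move: l1 l2 => + + /eqP; lia.
Qed.

Lemma count_same_scale_le_LCS Z : pairwise lt2 Z -> all matched Z ->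
  (count same_scale Z <= 2 * (k * L) * LCS w1 w2)%N.
Proof.
move=> pairwise_Z /allP matched_Z.
pose agree (y : nat * nat) := nth 0 w1 y.1 == nth 0 w2 y.2.
set l := filter agree [seq (block k L x.1, block k L x.2) | x <- Z].
have sorted_Z : sorted lt2 Z by rewrite (sorted_pairwise lt2_trans).
have le_l : pairwise le2 l.
  rewrite pairwise_filter // pairwise_map; apply: sub_pairwise pairwise_Z.
  by move=> x y /andP [lt1 lt2]; apply/andP; split; apply/leq_div2r/ltnW.
have window (proj : nat * nat -> nat) i : sorted ltn (map proj Z) ->
    (count (fun x => block k L (proj x) == i) Z <= k * L)%N.
  by move=> /(count_sorted_window i (kL_gt0 k_gt0 L_gt0)); rewrite count_map.
have rows i : (count (fun y => y.1 == i) l <= k * L)%N.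
  apply: leq_trans (window fst i (sorted_lt2_fst sorted_Z)).
  by rewrite count_filter count_map; apply: sub_count => x /andP [].
have cols j : (count (fun y => y.2 == j) l <= k * L)%N.
  apply: leq_trans (window snd j (sorted_lt2_snd sorted_Z)).
  by rewrite count_filter count_map; apply: sub_count => x /andP [].
have [C sub_C [sorted_C size_l]] := long_strict_subchain le_l rows cols.
have le_count : (count same_scale Z <= size l)%N.
  rewrite size_filter count_map.
  rewrite (@eq_in_count _ _ (fun x => same_scale x && agree (block k L x.1, block k L x.2))).
    by apply: sub_count => x /andP [].
  move=> x /matched_Z mx /=; case same_x : (same_scale x) => //=.
  by rewrite /agree same_scale_letter.
have agree_C : all (fun y => [&& y.1 < size w1, y.2 < size w2 & agree y]) C.
  apply/allP => y /sub_C; rewrite mem_filter => /andP [-> /mapP [x /matched_Z mx ->]] /=.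
  by case/and3P: mx => lt1 lt2 _; rewrite !(block_lt_size k_gt0 R_gt0 L_gt0 RK_dvd_L).
have le_C := size_agreeing_chain_le_LCS sorted_C agree_C.
apply: (leq_trans le_count); apply: (leq_trans size_l).
by rewrite leq_mul2l le_C orbT.
Qed.

Definition pair_span (x y : nat * nat) : nat := (y.1 - x.1).+1 + (y.2 - x.2).+1.

Lemma blocks_le_pair_span x y : le2 x y ->
  (((blocks y)%:R - (blocks x)%:R - 2) * (k%:R * L%:R) <= (pair_span x y)%:R :> rat)%R.
Proof.
case/andP=> le1 le2; rewrite -natrM; set N := (k * L)%N.
have N_gt0 : (0 < N)%N by apply: kL_gt0.
have floor : (blocks y * N <= y.1 + y.2)%N.
  by rewrite mulnDl leq_add // leq_trunc_div.
have ceil : (x.1 + x.2 + 2 <= (blocks x + 2) * N)%N.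
  have := ltn_ceil x.1 N_gt0; have := ltn_ceil x.2 N_gt0.
  by rewrite /blocks /block -/N !mulSn; lia.
have bound : ((blocks y - (blocks x + 2)) * N <= pair_span x y)%N.
  rewrite mulnBl /pair_span; move: floor ceil.
  by move: (blocks y * N)%N ((blocks x + 2) * N)%N => a b; lia.
have [le_b | lt_b] := leqP (blocks x + 2) (blocks y).
  move: bound; rewrite -(ler_nat rat) natrM natrB // natrD; apply: le_trans; lra.
apply: le_trans (ler0n _ _); rewrite pmulr_lle0 ?ltr0n //.
by move: lt_b; rewrite -(ltr_nat rat) natrD; lra.
Qed.

Lemma mul_pair_span x y : le2 x y ->
  ((R * pair_span x y)%:R + (R * (x.1 + x.2))%:R = (R * (y.1 + y.2))%:R + (2 * R)%:R :> rat)%R.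
Proof.
case/andP=> le1 le2; rewrite -!natrD; congr _%:R%R.
by rewrite /pair_span [(2 * R)%N]mulnC -!mulnDr; congr (R * _)%N; lia.
Qed.

Lemma gains_le_span x s : path lt2 x s -> all matched (x :: s) ->
  ((size s).+1%:R * ((R * (k + 1))%:R - k%:R) - (R * k.-1)%:R * (count same_scale (x :: s))%:R
   <= (R * pair_span x (last x s))%:R + 3 * (R * M)%:R
      + (3 * M * R)%:R * ((blocks (last x s))%:R - (blocks x)%:R) :> rat)%R.
Proof.
move=> path_s matched_s; have /andP [mx _] := matched_s.
have my : matched (last x s) by apply: (allP matched_s); apply: mem_last.
have pot := potential_path path_s matched_s.
rewrite sum_gain /potential !(natrM _ (3 * M * R)) in pot.
have gain_x := gain_le mx; rewrite (natrD _ (2 * R)) /gain in gain_x.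
case/and3P: (mx) => x1 x2 _; have /andP [cx1 cx2] := correction_bound x1 x2.
case/and3P: (my) => y1 y2 _; have /andP [cy1 cy2] := correction_bound y1 y2.
have span := mul_pair_span (path_lt2_le2_last path_s).
rewrite -[(size s).+1]addn1 [count _ (x :: s)]/= (natrD _ (size s)) (natrD _ (same_scale x)).
(* Generalizing the casts first keeps [lra] from unfolding them, which exhausts memory. *)
move: (correction x) (correction (last x s)) cx1 cx2 cy1 cy2 pot gain_x span => cx cy.
move: (R * (x.1 + x.2))%N (R * ((last x s).1 + (last x s).2))%N (R * pair_span x (last x s))%N => X Y S.
move: ((R * (k + 1))%N%:R : rat)%R ((R * k.-1)%N%:R : rat)%R ((R * M)%N%:R : rat)%R
  ((3 * M * R)%N%:R : rat)%R ((2 * R)%N%:R : rat)%R => A B RM P R2.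
move: ((blocks x)%:R : rat)%R ((blocks (last x s))%:R : rat)%R ((size s)%:R : rat)%R
  ((count same_scale s)%:R : rat)%R ((same_scale x : nat)%:R : rat)%R (k%:R : rat)%R => Bx By n c s0 kk.
lra.
Qed.

Lemma potential_span_bound x s : path lt2 x s -> all matched (x :: s) ->
  ((size s).+1%:R * (k%:R + 1 - k%:R / R%:R) - 3 * M%:R
     - (k%:R - 1) * (count same_scale (x :: s))%:R
     - 3 * M%:R * ((blocks (last x s))%:R - (blocks x)%:R)
   <= (pair_span x (last x s))%:R :> rat)%R.
Proof.
move=> path_s matched_s; have gains := gains_le_span path_s matched_s.
have R_pos : (0 < R%:R :> rat)%R by rewrite ltr0n.
have Ra : (R%:R * ((size s).+1%:R * (k%:R + 1 - k%:R / R%:R))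
    = (size s).+1%:R * (R%:R * (k%:R + 1) - k%:R) :> rat)%R.
  by rewrite mulrCA mulrBr mulrCA divff ?mulr1 // gt_eqF.
have pred_k : (k.-1%:R = k%:R - 1 :> rat)%R by rewrite -subn1 natrB.
rewrite !natrM natrD pred_k in gains.
rewrite -(ler_pM2l R_pos); move: Ra gains.
move: ((size s).+1%:R * _ : rat)%R => na.
move: ((count same_scale (x :: s))%:R : rat)%R ((blocks (last x s))%:R : rat)%R
  ((blocks x)%:R : rat)%R => c By Bx.
move: ((pair_span x (last x s))%:R : rat)%R ((size s).+1%:R : rat)%R (k%:R : rat)%R
  (R%:R : rat)%R (M%:R : rat)%R => S n kk r m.
lra.
Qed.

Lemma chain_span_bound x s : path lt2 x s -> all matched (x :: s) ->
  ((k%:R + 1 - k%:R / R%:R - 8 * M%:R / L%:R) * (size s).+1%:R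
     - 2 * L%:R * k%:R * (k%:R + 1) * (LCS w1 w2)%:R - 16 * M%:R
   <= (pair_span x (last x s))%:R :> rat)%R.
Proof.
move=> path_s matched_s.
have pairwise_s : pairwise lt2 (x :: s) by rewrite -path_pairwise //; exact: lt2_trans.
have count_le := count_same_scale_le_LCS pairwise_s matched_s.
apply: (combine_span_bounds (c := (count same_scale (x :: s))%:R)
  (H := (blocks (last x s))%:R - (blocks x)%:R)) => //.
- by rewrite ler_nat.
- by rewrite ltr0n.
- by move: count_le; rewrite -(ler_nat rat) !natrM mulrA.
- by rewrite lerBlDr lerDl divr_ge0.
- exact: potential_span_bound.
- exact: blocks_le_pair_span (path_lt2_le2_last path_s).
Qed.

End Matching.

Theorem lemma3p5 (k K R L : nat) (w1 w2 : seq nat) (b1 b2 : bitseq) :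
  (2 <= k)%N -> (1 <= K)%N -> (k <= R)%N -> (0 < L)%N -> (R ^ K.-1 %| L)%N ->
  word_over K w1 -> word_over K w2 ->
  common_subseq (hat k L R w1) (hat k L R w2) b1 b2 ->
  ((k%:R + 1 - k%:R / R%:R - 8 * (R ^ K.-1)%:R / L%:R) * (cs_len (hat k L R w1) b1)%:R
     - 2 * L%:R * k%:R * (k%:R + 1) * (LCS w1 w2)%:R - 16 * (R ^ K.-1)%:R
   <= (cs_span b1 b2)%:R :> rat)%R.
Proof.
move=> k_gt1 _ le_kR L_gt0 RK_dvd_L w1_over w2_over [size_b1 [size_b2 eq_masks]].
rewrite /cs_len /cs_span /span_mask (mask_positions size_b1) size_map.
rewrite !mask_positions // in eq_masks.
have lt1 := positions_lt b1; rewrite size_b1 in lt1.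
have lt2 := positions_lt b2; rewrite size_b2 in lt2.
have matched_pos := all_zip_nth_eq eq_masks lt1 lt2.
have := congr1 size eq_masks; rewrite !size_map.
have := sorted_positions b1; have := sorted_positions b2.
case: (positions b1) matched_pos => [|p P]; case: (positions b2) => [|q Q] //=
  matched_pos sorted_Q sorted_P.
  move=> _; have := ler0n rat (2 * L * k * (k + 1) * LCS w1 w2 + 16 * R ^ K.-1).
  by rewrite natrD !natrM natrD mulr0; lra.
case=> size_PQ.
have := chain_span_bound k_gt1 le_kR L_gt0 RK_dvd_L w1_over w2_over
  (path_lt2_zip size_PQ sorted_P sorted_Q) matched_pos.
by rewrite last_zip2 // size_zip size_PQ minnn.
Qed.
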